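(* For $\theta \in \mathrm{Aut}(\mathbb{F}_{p^m})$, $\eta_1 \in \mathbb{F}_{p^m}^*$, and $\eta_i \in 1 + u^{i-1}\mathbb{F}_{p^m}$ for $2 \le i \le k-1$, define \[ \Theta_{\theta,\eta_1,\dots,\eta_{k-1}} : R_k \to R_k,\qquad \sum_{i=0}^{k-1} a_i u^i \longmapsto \sum_{i=0}^{k-1} \theta(a_i)\Big(\prod_{j=1}^{k-1}\eta_j\Big)^{i} u^i \quad (a_i\in\mathbb{F}_{p^m}). \] Then each $\Theta_{\theta,\eta_1,\dots,\eta_{k-1}}$ is a ring automorphism of $R_k$, and \[ \mathrm{Aut}(R_k)=\{\Theta_{\theta,\eta_1,\dots,\eta_{k-1}} : \theta\in\mathrm{Aut}(\mathbb{F}_{p^m}),\ \eta_1\in\mathbb{F}_{p^m}^*,\ \eta_i\in 1+u^{i-1}\mathbb{F}_{p^m}\ (2\le i\le k-1)\}. \]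
   Context: Let $p$ be a prime, $m,k\ge 1$, $\mathbb{F}_{p^m}$ the finite field with $p^m$ elements, and $R_k=\mathbb{F}_{p^m}[u]/\langle u^k\rangle=\mathbb{F}_{p^m}+u\mathbb{F}_{p^m}+\dots+u^{k-1}\mathbb{F}_{p^m}$ with $u^k=0$. $\mathbb{F}_{p^m}^*$ denotes the nonzero elements of $\mathbb{F}_{p^m}$. *)

From HB Require Import structures.
From mathcomp Require Import all_boot all_order all_algebra all_field.
Set Implicit Arguments. Unset Strict Implicit. Unset Printing Implicit Defensive.
Import GRing.Theory.
Local Open Scope ring_scope.

(* R_k = F[u]/<u^k>, realized as polynomials of size <= k with multiplication
   modulo 'X^k (mathcomp qpoly); u is 'qX.  Requires k >= 1. *)
Definition Rk (F : fieldType) (k : nat) := {poly %/ ('X^k : {poly F})}.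

Definition is_ring_aut (R : nzRingType) (f : R -> R) : Prop :=
  (forall x y, f (x + y) = f x + f y) /\
  (forall x y, f (x * y) = f x * f y) /\
  f 1 = 1 /\ bijective f.

Definition uR (F : fieldType) (k : nat) : Rk F k := 'qX.
Definition cR (F : fieldType) (k : nat) (c : F) : Rk F k := qpolyC _ c.

Definition admissible_eta (F : fieldType) (k : nat) (eta : nat -> Rk F k) : Prop :=
  forall i, (1 <= i < k)%N ->
    ((i = 1)%N -> exists c : F, c != 0 /\ eta i = cR k c) /\
    ((2 <= i)%N -> exists b : F, eta i = 1 + uR F k ^+ (i - 1) * cR k b).

Definition Theta (F : fieldType) (k : nat) (theta : F -> F) (eta : nat -> Rk F k)
    (x : Rk F k) : Rk F k :=
  \sum_(i < k) cR k (theta ((x : {poly F})`_i))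
               * (\prod_(1 <= j < k) eta j) ^+ i * uR F k ^+ i.

From HB Require Import structures.
From mathcomp Require Import all_boot all_order all_algebra all_field.
From mathcomp Require Import zify.
From Stdlib Require Import FunctionalExtensionality.
Set Implicit Arguments. Unset Strict Implicit. Unset Printing Implicit Defensive.
Import GRing.Theory Pdiv.Ring Pdiv.RingMonic.
Local Open Scope ring_scope.

(* Theta applies theta to the coefficients and substitutes u := (prod_j eta_j) u.
   This respects u^k = 0 because the substituted element is again nilpotent, and it
   is injective because prod_j eta_j is a unit while every nonzero element of R_k is
   u^j times a unit.
   Conversely, let f be an automorphism.  The constants F are exactly the fixed
   points of y |-> y^#|F| (this power map is additive, and its iterates send u R_k
   to 0), so f maps F to itself and restricts to some theta.  f(u) is nilpotent,
   hence f(u) = u Q, and Q is a unit since f does not kill u^(k-1).  Only Q modulo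
   u^(k-1) matters, and such a unit factors as Q_0 prod_(2 <= i < k) (1 + u^(i-1) b_i)
   by peeling off one power of u at a time. *)

Lemma unitr1D_nilpotent (R : comUnitRingType) (x : R) n :
  x ^+ n = 0 -> (1 + x) \is a GRing.unit.
Proof.
move=> xn0; apply/unitrPr; exists (\sum_(i < n) (- x) ^+ i).
have := subrX1 (- x) n; rewrite exprNn xn0 mulr0 sub0r => sumE.
by apply: oppr_inj; rewrite sumE -mulNr opprD addrC.
Qed.

Lemma rmorph_rmodp_Xn (R : nzRingType) (S : pzRingType)
    (phi : {rmorphism {poly R} -> S}) k p :
  phi 'X^k = 0 -> phi (rmodp p 'X^k) = phi p.
Proof.
move=> phiXk; rewrite [in RHS](rdivp_eq (monicXn R k) p).
by rewrite rmorphD rmorphM phiXk mulr0 add0r.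
Qed.

Lemma ring_aut_zmod_morphism (R : nzRingType) (f : R -> R) :
  is_ring_aut f -> zmod_morphism f.
Proof. by move=> [fD _] x y; apply/(addIr (f y)); rewrite -fD !subrK. Qed.

Lemma ring_aut_monoid_morphism (R : nzRingType) (f : R -> R) :
  is_ring_aut f -> monoid_morphism f.
Proof. by move=> [_ [fM [f1 _]]]. Qed.

Definition rmorph_of_aut (R : nzRingType) (f : R -> R) (f_aut : is_ring_aut f) :
    {rmorphism R -> R} :=
  HB.pack_for {rmorphism R -> R} f
    (GRing.isZmodMorphism.Build R R f (ring_aut_zmod_morphism f_aut))
    (GRing.isMonoidMorphism.Build R R f (ring_aut_monoid_morphism f_aut)).

HB.instance Definition _ (F : fieldType) (k : nat) :=
  GRing.RMorphism.copy (@cR F k) (qpolyC _).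

Section TruncatedPolynomials.
Variables (F : fieldType) (k : nat).
Hypothesis k_gt0 : (0 < k)%N.
Local Notation R := (Rk F k).
Local Notation u := (uR F k).
Local Notation c := (@cR F k).

Lemma mk_monic_Xk : mk_monic ('X^k : {poly F}) = 'X^k.
Proof. by rewrite mk_monic_Xn prednK. Qed.

Lemma val_mulRk (x y : R) : val (x * y) = rmodp (val x * val y) 'X^k.
Proof. by rewrite [LHS]poly_of_qpolyM; congr rmodp; exact: mk_monic_Xk. Qed.

Lemma size_valRk (x : R) : (size (val x) <= k)%N.
Proof.
have sizeE : (size (mk_monic ('X^k : {poly F}))).-1 = k by rewrite mk_monic_Xk size_polyXn.
by rewrite -[X in (_ <= X)%N]sizeE; exact: size_npoly.
Qed.

Lemma val_uRX i : (i < k)%N -> val (u ^+ i) = 'X^i.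
Proof.
move=> ik; rewrite /uR /qpolyX -rmorphXn /= mk_monic_Xk.
by rewrite rmodp_small // !size_polyXn.
Qed.

Lemma uRX_eq0 i : (k <= i)%N -> u ^+ i = 0.
Proof.
move=> ki; rewrite -(subnK ki) exprD; suff -> : u ^+ k = 0 by rewrite mulr0.
apply/val_inj; rewrite /uR /qpolyX -rmorphXn /= mk_monic_Xk rmodpp //.
exact: monicXn.
Qed.

Lemma uRX_neq0 i : (i < k)%N -> u ^+ i != 0.
Proof.
move=> ik; apply/eqP => /(congr1 val); rewrite val_uRX //= => /eqP.
by rewrite -size_poly_eq0 size_polyXn.
Qed.

Lemma val_cR a : val (c a) = a%:P.
Proof. by []. Qed.

Lemma cR_inj : injective c.
Proof. by move=> a b /(congr1 val); rewrite !val_cR => /polyC_inj. Qed.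

Lemma Rk_expansion (x : R) : x = \sum_(i < k) c (val x)`_i * u ^+ i.
Proof.
apply: val_inj; rewrite raddf_sum /=.
have -> : \sum_(i < k) val (c (val x)`_i * u ^+ i) = \sum_(i < k) (val x)`_i *: 'X^i.
  apply: eq_bigr => i _; rewrite val_mulRk val_uRX // val_cR mul_polyC rmodp_small //.
  by rewrite (leq_ltn_trans (size_scale_leq _ _)) // !size_polyXn ltnS.
rewrite -poly_def; apply/polyP => j; rewrite coef_poly; case: ltnP => // kj.
by rewrite nth_default // (leq_trans (size_valRk x) kj).
Qed.

Lemma Rk_split (x : R) : exists z, x = c (val x)`_0 + u * z.
Proof.
exists (\sum_(0 <= i < k.-1) c (val x)`_i.+1 * u ^+ i).
rewrite {1}(Rk_expansion x) -(big_mkord xpredT (fun i => c (val x)`_i * u ^+ i)).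
rewrite big_ltn // expr0 mulr1 big_add1 mulr_sumr; congr (_ + _).
by apply: eq_bigr => i _; rewrite exprS mulrCA.
Qed.

Lemma mulu_nilpotent (z : R) : (u * z) ^+ k = 0.
Proof. by rewrite exprMn uRX_eq0 ?mul0r. Qed.

Lemma unitRkE (x : R) : (x \is a GRing.unit) = ((val x)`_0 != 0).
Proof.
have [z {1}->] := Rk_split x; set a := (val x)`_0; have [->|a_neq0] := eqVneq a 0.
  apply/negbTE/negP; rewrite rmorph0 add0r => /(unitrX k).
  by rewrite mulu_nilpotent unitr0.
have -> : c a + u * z = c a * (1 + u * (c a^-1 * z)).
  by rewrite mulrDr mulr1 mulrCA fmorphV mulVKr // rmorph_unit ?unitfE.
rewrite unitrM rmorph_unit ?unitfE //=.
exact: unitr1D_nilpotent (mulu_nilpotent _).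
Qed.

Lemma Rk_nilpotent_coef0 (x : R) n : x ^+ n = 0 -> (val x)`_0 = 0.
Proof.
move=> xn0; apply/eqP; rewrite -[_ == 0]negbK -unitRkE.
by apply/negP => /(unitrX n); rewrite xn0 unitr0.
Qed.

Lemma Rk_valuation (x : R) : x != 0 ->
  exists j (y : R), [/\ (j < k)%N, y \is a GRing.unit & x = u ^+ j * y].
Proof.
move=> x_neq0; suff : forall n j (z : R), (j + n = k)%N -> x = u ^+ j * z ->
    exists j (y : R), [/\ (j < k)%N, y \is a GRing.unit & x = u ^+ j * y].
  by apply; [exact: add0n | rewrite expr0 mul1r].
elim=> [|n IHn] j z jn xE.
  by move: x_neq0; rewrite xE uRX_eq0 ?mul0r ?eqxx // -jn addn0.
have [z' zE] := Rk_split z.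
have [a0|a_neq0] := eqVneq (val z)`_0 0.
  apply: (IHn j.+1 z'); first by rewrite addSnnS.
  by rewrite xE zE a0 rmorph0 add0r exprS mulrA (mulrC _ u).
by exists j, z; split; [lia | rewrite unitRkE |].
Qed.

Lemma mulu_factor_1DuX j (z : R) : (0 < j)%N -> exists b : nat -> F,
  u * (1 + u ^+ j * z) = u * \prod_(j.+1 <= i < k) (1 + u ^+ (i - 1) * c (b i)).
Proof.
move: {2}(k - j.+1)%N (erefl (k - j.+1)%N) => n; elim: n j z => [|n IHn] j z kj j_gt0.
  exists (fun=> 0); rewrite big_geq; last by lia.
  by rewrite mulrDr mulrA -exprS uRX_eq0 ?mul0r ?addr0; last by lia.
set b0 := (val z)`_0; have [z' zE] := Rk_split z.
set e := 1 + u ^+ j * c b0.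
have e_unit : e \is a GRing.unit.
  apply: (@unitr1D_nilpotent _ _ k).
  by rewrite -(prednK j_gt0) exprS -mulrA mulu_nilpotent.
have [b' IHb'] := IHn j.+1 (e^-1 * z') ltac:(lia) isT.
exists (fun i => if i == j.+1 then b0 else b' i).
rewrite big_ltn; last by lia.
rewrite eqxx (_ : j.+1 - 1 = j)%N; last by lia.
rewrite (@eq_big_nat _ _ _ j.+2 k _ (fun i => 1 + u ^+ (i - 1) * c (b' i))); last first.
  by move=> i /andP[ji _]; rewrite ifN //; apply/eqP; lia.
rewrite -/e mulrCA -IHb' mulrCA; congr (u * _).
by rewrite zE mulrDr mulrDr mulr1 addrA (mulrCA e) mulVKr // mulrA -exprSr.
Qed.

End TruncatedPolynomials.

Definition eta_prod (F : fieldType) (k : nat) (eta : nat -> Rk F k) : Rk F k :=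
  \prod_(1 <= j < k) eta j.

Section AdmissibleEta.
Variables (F : fieldType) (k : nat) (eta : nat -> Rk F k).
Hypotheses (k_gt0 : (0 < k)%N) (eta_adm : admissible_eta eta).

Lemma admissible_eta_unit j : (1 <= j < k)%N -> eta j \is a GRing.unit.
Proof.
move=> jk; have [eta1 eta_ge2] := eta_adm jk.
have [j1|j_neq1] := eqVneq j 1%N.
  by have [a [a_neq0 ->]] := eta1 j1; rewrite rmorph_unit ?unitfE.
have [b ->] := eta_ge2 ltac:(lia).
apply: (@unitr1D_nilpotent _ _ k).
by rewrite (_ : j - 1 = (j - 2).+1)%N ?exprS -?mulrA ?mulu_nilpotent //; lia.
Qed.

Lemma eta_prod_unit : eta_prod eta \is a GRing.unit.
Proof.
rewrite /eta_prod big_nat_cond.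
apply: (big_ind (fun x : Rk F k => x \is a GRing.unit)) => [|x y|j /andP[jk _]].
- exact: unitr1.
- by move=> xU yU; rewrite unitrM xU.
- exact: admissible_eta_unit.
Qed.

End AdmissibleEta.

Section ThetaMorphism.
Variables (F : fieldType) (k : nat) (theta : {rmorphism F -> F}) (eta : nat -> Rk F k).
Hypotheses (k_gt0 : (0 < k)%N) (eta_adm : admissible_eta eta).
Local Notation R := (Rk F k).
Local Notation u := (uR F k).
Local Notation Th := (Theta theta eta).

Fact comm_theta_eta_prod : commr_rmorph (cR k \o theta) (eta_prod eta * u).
Proof. by move=> a; exact: mulrC. Qed.

Local Notation Th_poly := (horner_morph comm_theta_eta_prod).

Lemma ThetaE x : Th x = Th_poly (val x).
Proof.
rewrite /Theta /horner_morph (@horner_coef_wide _ k); last first.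
  by rewrite size_map_poly size_valRk.
by apply: eq_bigr => i _; rewrite coef_map exprMn mulrA.
Qed.

Lemma Th_poly_Xk : Th_poly 'X^k = 0.
Proof. by rewrite rmorphXn /= horner_morphX exprMn uRX_eq0 ?mulr0. Qed.

Lemma ThetaD x y : Th (x + y) = Th x + Th y.
Proof. by rewrite !ThetaE /= rmorphD. Qed.

Lemma ThetaM x y : Th (x * y) = Th x * Th y.
Proof.
by rewrite !ThetaE val_mulRk // rmorph_rmodp_Xn ?rmorphM //; exact: Th_poly_Xk.
Qed.

Lemma Theta1 : Th 1 = 1.
Proof. by rewrite ThetaE /= rmorph1. Qed.

Lemma Theta_unit x : x \is a GRing.unit -> Th x \is a GRing.unit.
Proof. by move=> xU; apply/unitrPr; exists (Th x^-1); rewrite -ThetaM mulrV // Theta1. Qed.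

Lemma Theta_eq0 x : Th x = 0 -> x = 0.
Proof.
move=> Thx0; have [//|/(Rk_valuation k_gt0) [j [y [jk yU xE]]]] := eqVneq x 0.
set U := eta_prod eta ^+ j * Th y.
have UU : U \is a GRing.unit by rewrite unitrM unitrX ?eta_prod_unit ?Theta_unit.
have : u ^+ j * U = 0.
  rewrite -Thx0 xE ThetaM ThetaE val_uRX //= rmorphXn /= horner_morphX exprMn.
  by rewrite mulrCA mulrA.
move/(congr1 ( *%R^~ U^-1)); rewrite mulrK // mul0r => /eqP.
by rewrite (negbTE (@uRX_neq0 F k k_gt0 j jk)).
Qed.

Lemma Theta_inj : injective Th.
Proof.
move=> x y Thxy; apply/eqP; rewrite -subr_eq0; apply/eqP/Theta_eq0.
by apply/(addIr (Th y)); rewrite -ThetaD subrK Thxy add0r.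
Qed.

End ThetaMorphism.

Lemma Theta_ring_aut (F : finFieldType) k (theta : F -> F) (eta : nat -> Rk F k) :
  (0 < k)%N -> is_ring_aut theta -> admissible_eta eta -> is_ring_aut (Theta theta eta).
Proof.
move=> k_gt0 theta_aut eta_adm.
have -> : Theta theta eta = Theta (rmorph_of_aut theta_aut) eta by [].
split; [|split; [|split]].
- exact: ThetaD.
- exact: ThetaM.
- exact: Theta1.
- exact/injF_bij/Theta_inj.
Qed.

Lemma Rk_card_fixed_const (F : finFieldType) k p m (y : Rk F k) :
  (0 < k)%N -> prime p -> #|F| = (p ^ m)%N -> y ^+ #|F| = y -> y = cR k (val y)`_0.
Proof.
move=> k_gt0 p_prime cardF yq.
have [z yE] := Rk_split k_gt0 y; set b := (val y)`_0 in yE *; rewrite [LHS]yE.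
have charR : p \in [pchar Rk F k] by rewrite pchar_qpoly (card_finPcharP cardF).
have card_nat : [pchar Rk F k].-nat #|F| by rewrite cardF pnatX pnatE // charR.
have uzq : (uR F k * z) ^+ #|F| = uR F k * z.
  move: yq; rewrite [in LHS]yE exprDn_pchar // -rmorphXn expf_card [in RHS]yE.
  exact: addrI.
have uz_iter j : (uR F k * z) ^+ (#|F| ^ j) = uR F k * z.
  by elim: j => [|j IHj]; rewrite ?expr1 // expnS exprM uzq IHj.
have k_le : (k <= #|F| ^ k)%N by exact/ltnW/ltn_expl/finNzRing_gt1.
by rewrite -[X in _ + X](uz_iter k) exprMn (@uRX_eq0 F k k_gt0 _ k_le) mul0r addr0.
Qed.

Definition base_morph (F : fieldType) k (f : Rk F k -> Rk F k) (a : F) : F :=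
  (val (f (cR k a)))`_0.

Section RmorphRk.
Variables (F : finFieldType) (k p m : nat) (f : {rmorphism Rk F k -> Rk F k}).
Hypotheses (k_gt0 : (0 < k)%N) (p_prime : prime p) (cardF : #|F| = (p ^ m)%N).
Hypothesis f_inj : injective f.
Local Notation R := (Rk F k).
Local Notation u := (uR F k).
Local Notation c := (@cR F k).

Lemma rmorph_cR a : f (c a) = c (base_morph f a).
Proof.
apply: (Rk_card_fixed_const k_gt0 p_prime cardF).
by rewrite -rmorphXn -rmorphXn expf_card.
Qed.

Lemma base_morph_ring_aut : is_ring_aut (base_morph f).
Proof.
have base_morphE a : c (base_morph f a) = f (c a) by rewrite rmorph_cR.
split; [|split; [|split]].
- by move=> a b; apply: (@cR_inj F k); rewrite [RHS]rmorphD /= !base_morphE !rmorphD.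
- by move=> a b; apply: (@cR_inj F k); rewrite [RHS]rmorphM /= !base_morphE !rmorphM.
- by apply: (@cR_inj F k); rewrite base_morphE !rmorph1.
- by apply: injF_bij => a b /(congr1 c); rewrite !base_morphE => /f_inj/(@cR_inj F k).
Qed.

Lemma rmorph_uR_mulu : exists Q : R, f u = u * Q.
Proof.
have [Q fuE] := Rk_split k_gt0 (f u); exists Q.
rewrite fuE (@Rk_nilpotent_coef0 _ _ k_gt0 (f u) k) ?rmorph0 ?add0r //.
by rewrite -rmorphXn uRX_eq0 ?rmorph0.
Qed.

Lemma rmorph_uR_eta : exists eta, admissible_eta eta /\ f u = u * eta_prod eta.
Proof.
have [Q fuE] := rmorph_uR_mulu.
have [k_le1|k_gt1] := leqP k 1.
  exists (fun=> 1); split; first by move=> i; lia.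
  by rewrite fuE -(expr1 u) uRX_eq0 // !mul0r.
have [Q' QE] := Rk_split k_gt0 Q; set a := (val Q)`_0 in QE.
have a_neq0 : a != 0.
  apply/eqP => a0; have : f (u ^+ (k - 1)) = f 0.
    rewrite rmorphXn fuE QE a0 !rmorph0 add0r mulrA -expr2 exprMn -exprM.
    by rewrite uRX_eq0 ?mul0r //; lia.
  by move/f_inj/eqP; apply/negP; apply: uRX_neq0; lia.
have [b factorE] := mulu_factor_1DuX k_gt0 (c a^-1 * Q') (isT : (0 < 1)%N).
exists (fun i => if i == 1%N then c a else 1 + u ^+ (i - 1) * c (b i)); split.
  move=> i ik; split=> [->|i_ge2]; first by exists a.
  by exists (b i); rewrite ifN //; apply/eqP; lia.
rewrite /eta_prod big_ltn // eqxx.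
rewrite (@eq_big_nat _ _ _ 2 k _ (fun i => 1 + u ^+ (i - 1) * c (b i))); last first.
  by move=> i /andP[i_ge2 _]; rewrite ifN //; apply/eqP; lia.
rewrite mulrCA -factorE fuE QE expr1 mulrCA; congr (u * _).
by rewrite mulrDr mulr1 mulrCA fmorphV mulVKr // rmorph_unit ?unitfE.
Qed.

Lemma rmorph_Rk_Theta : exists eta, admissible_eta eta /\ f =1 Theta (base_morph f) eta.
Proof.
have [eta [eta_adm fuE]] := rmorph_uR_eta.
exists eta; split=> // x; rewrite {1}(Rk_expansion k_gt0 x) rmorph_sum.
apply: eq_bigr => i _.
by rewrite rmorphM rmorphXn rmorph_cR fuE exprMn [u ^+ i * _]mulrC mulrA.
Qed.

End RmorphRk.

Theorem lemma3p1 (p m k : nat) (F : finFieldType) :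
  prime p -> (0 < m)%N -> (0 < k)%N -> #|F| = (p ^ m)%N ->
  (forall (theta : F -> F) (eta : nat -> Rk F k),
      is_ring_aut theta -> admissible_eta eta ->
      is_ring_aut (Theta theta eta)) /\
  (forall f : Rk F k -> Rk F k,
      is_ring_aut f <->
      exists (theta : F -> F) (eta : nat -> Rk F k),
        is_ring_aut theta /\ admissible_eta eta /\ f = Theta theta eta).
Proof.
move=> p_prime _ k_gt0 cardF.
split=> [theta eta|f]; first exact: Theta_ring_aut.
split=> [f_aut|[theta [eta [theta_aut [eta_adm ->]]]]]; last exact: Theta_ring_aut.
pose g := rmorph_of_aut f_aut.
have g_inj : injective g by have [_ [_ [_ /bij_inj]]] := f_aut.
have [eta [eta_adm fE]] := rmorph_Rk_Theta k_gt0 p_prime cardF g_inj.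
exists (base_morph f), eta; split; first exact: base_morph_ring_aut k_gt0 p_prime cardF g_inj.
by split=> //; apply: functional_extensionality.
Qed.
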